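(* Under the smash product $\diamond$ on $C^\bullet$, the subspace $Z^\bullet$ is a subalgebra and $B^\bullet$ is a two-sided ideal of $Z^\bullet$: if $\alpha,\beta\in Z^\bullet$ then $\alpha\diamond\beta\in Z^\bullet$, and if $\alpha\in Z^\bullet$, $\beta\in B^\bullet$ then $\alpha\diamond\beta\in B^\bullet$ and $\beta\diamond\alpha\in B^\bullet$. In particular $Z^\bullet/B^\bullet$ is an algebra subquotient of $S(V)\otimes\bigwedge^\bullet V^*\otimes\mathbb C[G]$ under $\diamond$.
   Context: Let $G$ be a finite group and $V$ a complex vector space of finite dimension $n$ on which $G$ acts linearly; fix a $G$-invariant Hermitian inner product on $V$. For $g\in G$ let $V^g$ be the fixed space of $g$ and $(V^g)^\perp$ its orthogonal complement. $G$ acts on $V^*$ by $({}^g\phi)(v)=\phi({}^{g^{-1}}v)$ and hence on $S(V)$, $\bigwedge V^*$. For a subspace $W\subseteq V$ regard $W^*$ as the functionals in $V^*$ vanishing on $W^\perp$. Let $C^p=S(V)\otimes\bigwedge^pV^*\otimes\mathbb C[G]=\bigoplus_{g\in G}S(V)\otimes\bigwedge^pV^*\otimes g$. Let $Z^p=\bigoplus_{g\in G}S(V)\otimes\big(\bigwedge^{p-\operatorname{codim}V^g}(V^g)^*\wedge\bigwedge^{\operatorname{codim}V^g}((V^g)^\perp)^*\big)\otimes g\subseteq C^p$ and $B^p=\bigoplus_{g\in G}I((V^g)^\perp)\otimes\big(\bigwedge^{p-\operatorname{codim}V^g}(V^g)^*\wedge\bigwedge^{\operatorname{codim}V^g}((V^g)^\perp)^*\big)\otimes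 g$, where $I((V^g)^\perp)$ is the ideal of $S(V)$ generated by $(V^g)^\perp\subseteq V$ and negative exterior powers are $0$. The smash product on $C^\bullet$ (the skew group algebra $(S(V)\otimes\bigwedge^\bullet V^* )\#G$ for the diagonal action) is $(f\otimes\omega\otimes g)\diamond(f'\otimes\omega'\otimes h)=f\,{}^gf'\otimes(\omega\wedge{}^g\omega')\otimes gh$. *)

From HB Require Import structures.
From mathcomp Require Import all_boot all_order all_algebra all_fingroup all_character.
Set Implicit Arguments.
Unset Strict Implicit.
Unset Printing Implicit Defensive.
Import Order.TTheory GRing.Theory Num.Theory.
Local Open Scope ring_scope.

(* Model:
   - the base field is an arbitrary numClosedFieldType C (covers the complex numbers);
   - V = 'rV[C]_n, with standard basis e_i; V^* = 'rV[C]_n (coordinates in the dual basis),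
     pairing phi(v) = sum_i phi_i v_i;
   - the finite group is the whole finGroupType gT, acting linearly on V on the LEFT by
     ^g v = v *m rG g^-1, where rG is a matrix representation (right action on rows);
   - the G-invariant Hermitian inner product is <u,v> = u H v^*  (H Hermitian pos. def.);
   - S(V) is realised as the algebra of polynomial functions on V^* (generated by the
     linear functions phi |-> phi(v), v in V); an element of S(V) (x) /\V^* is a map
     V^* -> /\V^*_C, and an element of C^. = S(V) (x) /\V^* (x) C[G] is a map
     gT -> V^* -> /\V^*_C;
   - /\V^* has basis eps_I, I : {set 'I_n}, eps_I = eps_{i1} /\ ... /\ eps_{ik}, i1<..<ik. *)

Section Smash.
Variables (C : numClosedFieldType) (n : nat) (gT : finGroupType).
Variable rG : mx_representation C [set: gT]%G n.
Variable H : 'M[C]_n.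

Local Notation V := 'rV[C]_n.

Definition ext := {ffun {set 'I_n} -> C}.
Definition elt := gT -> V -> ext.

Definition pairing (phi v : V) : C := \sum_(i < n) phi 0 i * v 0 i.

(* left action of g on V, and the contragredient action on V^*:
   (actD g phi)(v) = phi(actV g^-1 v) *)
Definition actV (g : gT) (v : V) : V := v *m rG g^-1%g.
Definition actD (g : gT) (phi : V) : V := phi *m (rG g)^T.

Definition inner (u v : V) : C :=
  \sum_(i < n) \sum_(j < n) u 0 i * H i j * (v 0 j)^*.

Definition fixV (g : gT) (v : V) : Prop := actV g v = v.
Definition perp (W : V -> Prop) (v : V) : Prop := forall w, W w -> inner w v = 0.
(* W^* = functionals vanishing on W^perp *)
Definition dualSub (W : V -> Prop) (phi : V) : Prop :=
  forall v, perp W v -> pairing phi v = 0.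
(* codim V^g ; the row space of kermx (rG g - 1) is V^g *)
Definition codim (g : gT) : nat := (n - \rank (kermx (rG g - 1%:M)))%N.

Definition eunit : ext := [ffun I => (I == set0)%:R].
Definition form1 (phi : V) : ext :=
  [ffun I => \sum_(i < n) (I == [set i])%:R * phi 0 i].
Definition wsign (I J : {set 'I_n}) : C :=
  (-1) ^+ #|[set ij : 'I_n * 'I_n | [&& ij.1 \in I, ij.2 \in J & (ij.2 < ij.1)%N]]|.
Definition wedge (a b : ext) : ext :=
  [ffun K => \sum_(I : {set 'I_n}) \sum_(J : {set 'I_n} | (I :&: J == set0) && (I :|: J == K))
      wsign I J * a I * b J].
Definition wedgeL (s : seq V) : ext := foldr (fun phi w => wedge (form1 phi) w) eunit s.
Definition actE (g : gT) (w : ext) : ext :=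
  [ffun K => \sum_(J : {set 'I_n})
      w J * wedgeL [seq actD g (delta_mx 0 j) | j <- enum J] K].

Definition ext_span (P : ext -> Prop) (x : ext) : Prop :=
  exists m (c : 'I_m -> C) (y : 'I_m -> ext),
    (forall i, P (y i)) /\ x = [ffun K => \sum_(i < m) c i * y i K].
Definition extPow (k : nat) (W : V -> Prop) : ext -> Prop :=
  ext_span (fun x => exists s : seq V,
     size s = k /\ (forall phi, phi \in s -> W phi) /\ x = wedgeL s).
Definition wedgeSp (X Y : ext -> Prop) : ext -> Prop :=
  ext_span (fun x => exists a b, X a /\ Y b /\ x = wedge a b).
Definition Xg (g : gT) (p : nat) (x : ext) : Prop :=
  if (codim g <= p)%N then
    wedgeSp (extPow (p - codim g) (dualSub (fixV g)))
            (extPow (codim g) (dualSub (perp (fixV g)))) x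
  else x = 0.

(* S(V) as polynomial functions on V^*, v in V being phi |-> phi(v) *)
Inductive polyS : (V -> C) -> Prop :=
| polyS_const c : polyS (fun _ => c)
| polyS_lin v : polyS (fun phi => pairing phi v)
| polyS_add f h : polyS f -> polyS h -> polyS (fun phi => f phi + h phi)
| polyS_mul f h : polyS f -> polyS h -> polyS (fun phi => f phi * h phi).

Definition idealS (W : V -> Prop) (f : V -> C) : Prop :=
  exists m (h : 'I_m -> V -> C) (w : 'I_m -> V),
    (forall i, polyS (h i)) /\ (forall i, W (w i)) /\
    f = (fun phi => \sum_(i < m) h i phi * pairing phi (w i)).

Definition tensorS (P : (V -> C) -> Prop) (X : ext -> Prop) (a : V -> ext) : Prop :=
  exists m (f : 'I_m -> V -> C) (x : 'I_m -> ext),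
    (forall i, P (f i)) /\ (forall i, X (x i)) /\
    a = (fun phi => [ffun K => \sum_(i < m) f i phi * x i K]).

Definition inZp (p : nat) (a : elt) : Prop :=
  forall g, tensorS polyS (Xg g p) (a g).
Definition inBp (p : nat) (a : elt) : Prop :=
  forall g, tensorS (idealS (perp (fixV g))) (Xg g p) (a g).

(* Z^. = (+)_p Z^p ,  B^. = (+)_p B^p  (C^p = 0 for p > n) *)
Definition inZ (a : elt) : Prop :=
  exists b : 'I_n.+1 -> elt, (forall p : 'I_n.+1, inZp p (b p)) /\
    a = (fun g phi => [ffun K => \sum_(p < n.+1) b p g phi K]).
Definition inB (a : elt) : Prop :=
  exists b : 'I_n.+1 -> elt, (forall p : 'I_n.+1, inBp p (b p)) /\
    a = (fun g phi => [ffun K => \sum_(p < n.+1) b p g phi K]).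

(* smash product: (f (x) w (x) g) <> (f' (x) w' (x) h) = f ^g f' (x) w /\ ^g w' (x) gh *)
Definition smash (a b : elt) : elt :=
  fun k phi => [ffun K => \sum_(g : gT)
     wedge (a g phi) (actE g (b (g^-1 * k)%g (actD g^-1%g phi))) K].

End Smash.

From Pilot Require Import Defs.
From HB Require Import structures.
From Stdlib Require Import FunctionalExtensionality.
From mathcomp Require Import all_boot all_order all_algebra all_fingroup all_character.
From mathcomp Require Import zify.
Set Implicit Arguments. Unset Strict Implicit. Unset Printing Implicit Defensive.
Import Order.TTheory GRing.Theory Num.Theory.
Local Open Scope ring_scope.

(* Everything is bilinear, so it suffices to multiply generators
   f (x) w1 /\ w2 (x) g and f' (x) w1' /\ w2' (x) h, where w2 is a wedge of
   codim V^g covectors vanishing on V^g, w1 a wedge of covectors in (V^g)^*,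
   and similarly for h.  Up to sign the product is
   f ^g f' (x) (w1 /\ ^g w1') /\ (w2 /\ ^g w2') (x) gh.  If the codim g + codim h
   covectors L of w2 /\ ^g w2' are dependent the product vanishes.  Otherwise
   (key linear algebra, IndependentProduct) V^{gh} = V^g n V^{ghg^-1},
   codim V^{gh} = codim V^g + codim V^h, L spans ((V^{gh})^perp)^*, and modulo
   span L every covector can be moved into (V^{gh})^*, which puts the product
   among the generators of the gh-component of X^{p+q}. *)

HB.instance Definition _ (C : numClosedFieldType) (n : nat) :=
  GRing.Lmodule.copy (ext C n) {ffun {set 'I_n} -> C^o}.

Section ExteriorAlgebra.
Variables (C : numClosedFieldType) (n : nat).
Local Notation V := 'rV[C]_n.
Local Notation ext := (ext C n).
Local Notation wedge := (@wedge C n).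
Local Notation form1 := (@form1 C n).
Local Notation wsign := (@wsign C n).
Local Notation wedgeL := (@wedgeL C n).

Lemma extZE r (x : ext) K : (r *: x) K = r * x K.
Proof. by rewrite ffunE. Qed.

Lemma ffun_sumZ m (c : 'I_m -> C) (y : 'I_m -> ext) :
  [ffun K => \sum_(i < m) c i * y i K] = \sum_(i < m) c i *: y i.
Proof.
by apply/ffunP => K; rewrite ffunE sum_ffunE; apply: eq_bigr => i _; rewrite extZE.
Qed.

Definition eps (J : {set 'I_n}) : ext := [ffun K => (K == J)%:R].

Lemma ext_expand (a : ext) : a = \sum_J a J *: eps J.
Proof.
apply/ffunP => K; rewrite sum_ffunE (bigD1 K) //= big1 => [|J /negbTE nJK].
  by rewrite extZE ffunE eqxx addr0 mulr1.
by rewrite extZE ffunE eq_sym nJK mulr0.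
Qed.

Lemma eunitE : eunit C n = eps set0.
Proof. by apply/ffunP => K; rewrite !ffunE. Qed.

Lemma wedgeDl (a b c : ext) : wedge (a + b) c = wedge a c + wedge b c.
Proof.
apply/ffunP => K; rewrite !ffunE -big_split; apply: eq_bigr => I _.
by rewrite -big_split; apply: eq_bigr => J _; rewrite ffunE mulrDr mulrDl.
Qed.

Lemma wedgeDr (a b c : ext) : wedge a (b + c) = wedge a b + wedge a c.
Proof.
apply/ffunP => K; rewrite !ffunE -big_split; apply: eq_bigr => I _.
by rewrite -big_split; apply: eq_bigr => J _; rewrite ffunE mulrDr.
Qed.

Lemma wedgeZl r (a c : ext) : wedge (r *: a) c = r *: wedge a c.
Proof.
apply/ffunP => K; rewrite extZE !ffunE mulr_sumr; apply: eq_bigr => I _.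
by rewrite mulr_sumr; apply: eq_bigr => J _; rewrite extZE mulrCA !mulrA.
Qed.

Lemma wedgeZr r (a c : ext) : wedge a (r *: c) = r *: wedge a c.
Proof.
apply/ffunP => K; rewrite extZE !ffunE mulr_sumr; apply: eq_bigr => I _.
by rewrite mulr_sumr; apply: eq_bigr => J _; rewrite extZE mulrCA.
Qed.

Lemma wedge0l (c : ext) : wedge 0 c = 0.
Proof. by have := wedgeZl 0 0 c; rewrite !scale0r. Qed.

Lemma wedge0r (c : ext) : wedge c 0 = 0.
Proof. by have := wedgeZr 0 c 0; rewrite !scale0r. Qed.

Lemma wedgeNl (a c : ext) : wedge (- a) c = - wedge a c.
Proof. by rewrite -scaleN1r wedgeZl scaleN1r. Qed.

Lemma wedge_suml I (r : seq I) P (F : I -> ext) c :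
  wedge (\sum_(i <- r | P i) F i) c = \sum_(i <- r | P i) wedge (F i) c.
Proof. exact: (big_morph (fun a => wedge a c) (fun x y => wedgeDl x y c) (wedge0l c)). Qed.

Lemma wedge_sumr I (r : seq I) P (F : I -> ext) c :
  wedge c (\sum_(i <- r | P i) F i) = \sum_(i <- r | P i) wedge c (F i).
Proof. exact: (big_morph (wedge c) (wedgeDr c) (wedge0r c)). Qed.

Lemma wedge_sum2 I J (r : seq I) (r' : seq J) (F : I -> ext) (G : J -> ext) :
  wedge (\sum_(i <- r) F i) (\sum_(j <- r') G j) =
  \sum_(i <- r) \sum_(j <- r') wedge (F i) (G j).
Proof. by rewrite wedge_suml; apply: eq_bigr => i _; rewrite wedge_sumr. Qed.

Lemma wedge_eps I J : wedge (eps I) (eps J) =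
  if I :&: J == set0 then wsign I J *: eps (I :|: J) else 0.
Proof.
apply/ffunP => K; rewrite ffunE (bigD1 I) //=.
rewrite [X in _ + X]big1 ?addr0 => [|I' nI']; last first.
  by rewrite big1 // => J' _; rewrite [eps I I']ffunE (negbTE nI') mulr0 mul0r.
rewrite big_mkcond (bigD1 J) //= big1 ?addr0 => [|J' nJ']; last first.
  by case: ifP => // _; rewrite [eps J J']ffunE (negbTE nJ') mulr0.
rewrite ![eps _ _]ffunE !eqxx !mulr1.
case: (I :&: J == set0) => /=; last by rewrite ffunE.
by rewrite extZE ffunE [K == _]eq_sym; case: (_ == _); rewrite ?mulr1 ?mulr0.
Qed.

Definition inversions (I J : {set 'I_n}) :=
  [set ij : 'I_n * 'I_n | [&& ij.1 \in I, ij.2 \in J & (ij.2 < ij.1)%N]].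

Lemma wsignE I J : wsign I J = (-1) ^+ #|inversions I J|.
Proof. by []. Qed.

Lemma wsignUl I J M : I :&: J == set0 -> wsign (I :|: J) M = wsign I M * wsign J M.
Proof.
move=> /eqP dIJ; rewrite !wsignE -exprD; congr (_ ^+ _).
have -> : inversions (I :|: J) M = inversions I M :|: inversions J M.
  by apply/setP => -[x y]; rewrite !inE /= andb_orl.
rewrite cardsU (_ : inversions I M :&: inversions J M = set0) ?cards0 ?subn0 //.
apply/setP => -[x y]; rewrite !inE /=; apply/negP => /andP[/and3P[xI _ _] /and3P[xJ _ _]].
by move: (in_set0 x); rewrite -dIJ inE xI xJ.
Qed.

Lemma wsignUr I J M : J :&: M == set0 -> wsign I (J :|: M) = wsign I J * wsign I M.
Proof.
move=> /eqP dJM; rewrite !wsignE -exprD; congr (_ ^+ _).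
have -> : inversions I (J :|: M) = inversions I J :|: inversions I M.
  by apply/setP => -[x y]; rewrite !inE /= andb_orl andb_orr.
rewrite cardsU (_ : inversions I J :&: inversions I M = set0) ?cards0 ?subn0 //.
apply/setP => -[x y]; rewrite !inE /=; apply/negP => /andP[/and3P[_ yJ _] /and3P[_ yM _]].
by move: (in_set0 y); rewrite -dJM inE yJ yM.
Qed.

Lemma wsign0l J : wsign set0 J = 1.
Proof.
by rewrite wsignE (_ : inversions _ _ = set0) ?cards0 // ; apply/setP => -[x y]; rewrite !inE.
Qed.

Lemma wsign0r I : wsign I set0 = 1.
Proof.
rewrite wsignE (_ : inversions _ _ = set0) ?cards0 //.
by apply/setP => -[x y]; rewrite !inE andbF.
Qed.

Lemma wedge_eps_assoc I J M :
  wedge (wedge (eps I) (eps J)) (eps M) = wedge (eps I) (wedge (eps J) (eps M)).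
Proof.
rewrite !wedge_eps; case dIJ: (I :&: J == set0); case dJM: (J :&: M == set0);
  rewrite ?wedge0l ?wedge0r ?wedgeZl ?wedgeZr ?wedge_eps ?setIUl ?setIUr
          ?setU_eq0 ?dIJ ?dJM //=.
all: case dIM: (I :&: M == set0); rewrite ?andbF ?scaler0 //.
by rewrite !scalerA wsignUl // wsignUr // setUA mulrA [in RHS]mulrC.
Qed.

Lemma wedge_assoc a b c : wedge (wedge a b) c = wedge a (wedge b c).
Proof.
rewrite {1}(ext_expand a) {2}(ext_expand a) !wedge_suml; apply: eq_bigr => I _.
rewrite !wedgeZl; congr (_ *: _).
rewrite (ext_expand b) wedge_sumr !wedge_suml wedge_sumr; apply: eq_bigr => J _.
rewrite wedgeZr !wedgeZl wedgeZr; congr (_ *: _).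
rewrite (ext_expand c) !wedge_sumr; apply: eq_bigr => M _.
by rewrite !wedgeZr wedge_eps_assoc.
Qed.

Lemma wedge1l a : wedge (eunit C n) a = a.
Proof.
rewrite eunitE {1}(ext_expand a) wedge_sumr {2}(ext_expand a); apply: eq_bigr => J _.
by rewrite wedgeZr wedge_eps set0I eqxx wsign0l scale1r set0U.
Qed.

Lemma wedge1r a : wedge a (eunit C n) = a.
Proof.
rewrite eunitE {1}(ext_expand a) wedge_suml {2}(ext_expand a); apply: eq_bigr => J _.
by rewrite wedgeZl wedge_eps setI0 eqxx setU0 wsign0r scale1r.
Qed.

Lemma form1_expand (a : V) : form1 a = \sum_i a 0 i *: eps [set i].
Proof.
apply/ffunP => K; rewrite ffunE sum_ffunE; apply: eq_bigr => i _.
by rewrite extZE ffunE mulrC.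
Qed.

Lemma form1_delta (i : 'I_n) : form1 (delta_mx 0 i) = eps [set i].
Proof.
rewrite form1_expand (bigD1 i) //= big1 => [|j nji].
  by rewrite mxE !eqxx scale1r addr0.
by rewrite mxE eqxx (negbTE nji) scale0r.
Qed.

Lemma form1D (a b : V) : form1 (a + b) = form1 a + form1 b.
Proof.
apply/ffunP => K; rewrite !ffunE -big_split; apply: eq_bigr => i _.
by rewrite mxE mulrDr.
Qed.

Lemma form1Z r (a : V) : form1 (r *: a) = r *: form1 a.
Proof.
apply/ffunP => K; rewrite extZE !ffunE mulr_sumr; apply: eq_bigr => i _.
by rewrite mxE mulrCA.
Qed.

Lemma form10 : form1 0 = 0.
Proof. by have := form1Z 0 0; rewrite !scale0r. Qed.

Lemma form1_sum I (r : seq I) P (F : I -> V) :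
  form1 (\sum_(i <- r | P i) F i) = \sum_(i <- r | P i) form1 (F i).
Proof. exact: (big_morph form1 form1D form10). Qed.

Lemma wedge_form1C (a b : V) : wedge (form1 a) (form1 b) = - wedge (form1 b) (form1 a).
Proof.
have eps11 (i j : 'I_n) :
    wedge (eps [set i]) (eps [set j]) = - wedge (eps [set j]) (eps [set i]).
  rewrite !wedge_eps; case: (eqVneq i j) => [->|nij].
    rewrite setIid (_ : ([set j] == set0) = false) ?oppr0 //.
    by apply/negbTE/set0Pn; exists j; rewrite inE.
  have dij : [set i] :&: [set j] == set0 by rewrite setI_eq0 disjoints1 inE.
  rewrite dij setIC dij setUC -scaleNr; congr (_ *: _).
  have inv1 (x y : 'I_n) : #|inversions [set x] [set y]| = (y < x)%N.
    have -> : inversions [set x] [set y] = if (y < x)%N then [set (x, y)] else set0.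
      apply/setP => -[u v]; rewrite !inE /=.
      by case: ifP => yx; rewrite ?inE ?xpair_eqE; do 2 case: eqP => [->|] //=; rewrite yx.
    by case: ifP; rewrite ?cards1 ?cards0.
  rewrite !wsignE !inv1; case: (ltngtP i j) => [h|h|/val_inj h].
  - by rewrite expr0 expr1 opprK.
  - by rewrite expr0 expr1.
  - by rewrite h eqxx in nij.
rewrite !form1_expand !wedge_sum2 [in RHS]exchange_big -sumrN; apply: eq_bigr => i _.
rewrite -sumrN; apply: eq_bigr => j _.
by rewrite !wedgeZl !wedgeZr eps11 !scalerN !scalerA mulrC.
Qed.

Lemma wedge_form1_id (a : V) : wedge (form1 a) (form1 a) = 0.
Proof.
have h := wedge_form1C a a; move: h; set x := wedge _ _ => h.
have : (2%:R : C) *: x = 0 by rewrite scaler_nat mulr2n {1}h addNr.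
by move/eqP; rewrite scaler_eq0 pnatr_eq0 /= => /eqP.
Qed.

Lemma wedgeL_cat s t : wedgeL (s ++ t) = wedge (wedgeL s) (wedgeL t).
Proof.
elim: s => [|a s IH]; first by rewrite wedge1l.
by rewrite cat_cons /= IH wedge_assoc.
Qed.

Lemma wedgeL_move s a w : wedge (wedgeL s) (wedge (form1 a) w) =
  (-1) ^+ size s *: wedge (form1 a) (wedge (wedgeL s) w).
Proof.
elim: s => [|b s IH]; first by rewrite !wedge1l expr0 scale1r.
rewrite /= !wedge_assoc IH wedgeZr -wedge_assoc wedge_form1C wedgeNl.
by rewrite wedge_assoc exprS mulN1r scaleNr scalerN.
Qed.

Lemma wedgeL_swap s t : wedge (wedgeL s) (wedgeL t) =
  (-1) ^+ (size s * size t) *: wedge (wedgeL t) (wedgeL s).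
Proof.
elim: t => [|b t IH]; first by rewrite wedge1l wedge1r muln0 expr0 scale1r.
rewrite /= wedgeL_move IH wedgeZr -wedge_assoc scalerA -exprD.
by rewrite mulnS.
Qed.

Lemma wedgeL_blocks (A B C' D : seq V) :
  wedgeL ((A ++ B) ++ (C' ++ D)) =
  (-1) ^+ (size B * size C') *: wedgeL ((A ++ C') ++ (B ++ D)).
Proof.
rewrite !wedgeL_cat !wedge_assoc -[wedge (wedgeL B) (wedge _ _)]wedge_assoc.
by rewrite wedgeL_swap wedgeZl wedgeZr wedge_assoc.
Qed.

Definition spanM (s : seq V) : 'M[C]_n := (\sum_(v <- s) <<v>>)%MS.

Lemma spanM_cons a s : spanM (a :: s) = (<<a>> + spanM s)%MS.
Proof. by rewrite /spanM big_cons. Qed.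

Lemma spanM_cat s t : spanM (s ++ t) = (spanM s + spanM t)%MS.
Proof. by rewrite /spanM big_cat. Qed.

Lemma mem_spanM a s : a \in s -> (a <= spanM s)%MS.
Proof.
elim: s => [//|b s IH]; rewrite in_cons spanM_cons => /orP[/eqP->|/IH h].
  by apply: submx_trans (addsmxSl _ _); rewrite genmxE.
exact: submx_trans h (addsmxSr _ _).
Qed.

Lemma spanM_sub (s : seq V) m (M : 'M[C]_(m, n)) :
  (forall a, a \in s -> (a <= M)%MS) -> (spanM s <= M)%MS.
Proof.
elim: s => [_|b s IH h]; first by rewrite /spanM big_nil sub0mx.
rewrite spanM_cons addsmx_sub genmxE h ?mem_head //= IH // => a ain.
by apply: h; rewrite in_cons ain orbT.
Qed.

Lemma rank_spanM s : (\rank (spanM s) <= size s)%N.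
Proof.
elim: s => [|b s IH]; first by rewrite /spanM big_nil mxrank0.
rewrite spanM_cons; apply: leq_trans (mxrank_adds_leqif _ _) _.
by rewrite genmxE /= -(add1n (size s)) leq_add // rank_leq_row.
Qed.

Lemma wedge_form1_span a t : (a <= spanM t)%MS -> wedge (form1 a) (wedgeL t) = 0.
Proof.
elim: t a => [|b t IH] a.
  by rewrite /spanM big_nil submx0 => /eqP->; rewrite form10 wedge0l.
rewrite spanM_cons => /sub_addsmxP[[u1 u2] /= ->].
have : (u1 *m <<b>> <= b)%MS by rewrite -(genmxE b) submxMl.
case/sub_rVP => c ->; rewrite form1D form1Z wedgeDl wedgeZl.
rewrite -wedge_assoc wedge_form1_id wedge0l scaler0 add0r.
rewrite -wedge_assoc wedge_form1C wedgeNl wedge_assoc IH ?wedge0r ?oppr0 //.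
exact: submxMl.
Qed.

Lemma wedgeL_dep s : (\rank (spanM s) < size s)%N -> wedgeL s = 0.
Proof.
elim: s => [//|b s IH] /=; rewrite spanM_cons => hr.
case: (boolP (b <= spanM s)%MS) => hb; first by rewrite wedge_form1_span.
rewrite IH ?wedge0r //; rewrite ltnS in hr; apply: leq_trans hr.
rewrite (ltn_leqif (mxrank_leqif_sup (addsmxSr <<b>>%MS (spanM s)))).
apply: contra hb => sub; apply: submx_trans sub.
by apply: submx_trans (addsmxSl _ _); rewrite genmxE.
Qed.


Lemma wedgeL_adjust (P : V -> Prop) u L :
  (forall a : V, exists2 b, (b - a <= spanM L)%MS & P b) ->
  exists u', [/\ size u' = size u, forall b, b \in u' -> P b
               & wedgeL (u' ++ L) = wedgeL (u ++ L)].
Proof.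
move=> hP; elim: u => [|a u [u' [sz hu' e]]]; first by exists [::].
have [b ba Pb] := hP a; exists (b :: u'); split; first by rewrite /= sz.
  by move=> c; rewrite in_cons => /orP[/eqP->|/hu'].
rewrite /= e; have -> : b = a + (b - a) by rewrite addrC subrK.
rewrite form1D wedgeDl (@wedge_form1_span (b - a)) ?addr0 //.
by rewrite spanM_cat; apply: submx_trans (addsmxSr _ _).
Qed.

End ExteriorAlgebra.
Section DiagonalAction.
Variables (C : numClosedFieldType) (n : nat) (gT : finGroupType).
Variable rG : mx_representation C [set: gT]%G n.
Local Notation V := 'rV[C]_n.
Local Notation ext := (ext C n).
Local Notation wedge := (@wedge C n).
Local Notation form1 := (@form1 C n).
Local Notation wedgeL := (@wedgeL C n).
Local Notation actE := (actE rG).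
Local Notation actD := (actD rG).
Local Notation eps := (@eps C n).

Definition basis_image (g : gT) (j : 'I_n) : V := actD g (delta_mx 0 j).

Lemma actED g a b : actE g (a + b) = actE g a + actE g b.
Proof.
apply/ffunP => K; rewrite !ffunE -big_split; apply: eq_bigr => J _.
by rewrite ffunE mulrDl.
Qed.

Lemma actEZ g r a : actE g (r *: a) = r *: actE g a.
Proof.
apply/ffunP => K; rewrite extZE !ffunE mulr_sumr; apply: eq_bigr => J _.
by rewrite extZE mulrA.
Qed.

Lemma actE0 g : actE g 0 = 0.
Proof. by have := actEZ g 0 0; rewrite !scale0r. Qed.

Lemma actE_sum g I (r : seq I) P (F : I -> ext) :
  actE g (\sum_(i <- r | P i) F i) = \sum_(i <- r | P i) actE g (F i).
Proof. exact: (big_morph (actE g) (actED g) (actE0 g)). Qed.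

Lemma actE_eps g J : actE g (eps J) = wedgeL (map (basis_image g) (enum J)).
Proof.
apply/ffunP => K; rewrite ffunE (bigD1 J) //= big1 => [|J' nJ'].
  by rewrite ffunE eqxx mul1r addr0.
by rewrite ffunE (negbTE nJ') mul0r.
Qed.

Lemma actD_sum g I (r : seq I) P (F : I -> V) :
  actD g (\sum_(i <- r | P i) F i) = \sum_(i <- r | P i) actD g (F i).
Proof. by rewrite /Defs.actD mulmx_suml. Qed.

Lemma wedgeL_insert (f : 'I_n -> V) (P : pred 'I_n) i e :
  sorted (fun x y : 'I_n => (x < y)%N) e -> i \in e -> ~~ P i ->
  wedgeL (map f (filter (fun x => (x == i) || P x) e)) =
  (-1) ^+ count (fun j => P j && (j < i)%N) e *:
    wedge (form1 (f i)) (wedgeL (map f (filter P e))).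
Proof.
elim: e => [//|x e IH] srt; rewrite in_cons => ie nPi.
have se : sorted (fun x y : 'I_n => (x < y)%N) e by apply: path_sorted srt.
have ax : all (fun y : 'I_n => (x < y)%N) e.
  by apply: order_path_min srt => a b c; apply: ltn_trans.
case: (eqVneq i x) => [eix|nix].
  subst x; rewrite /= eqxx /= (negbTE nPi) /= add0n.
  rewrite (eq_in_filter (a1 := fun x => (x == i) || P x) (a2 := P)); last first.
    by move=> y ye; have := allP ax y ye; case: (eqVneq y i) => [->|//]; rewrite ltnn.
  rewrite (eq_in_count (a1 := fun j => P j && (j < i)%N) (a2 := pred0)); last first.
    move=> y ye; have := allP ax y ye => h; apply/negbTE; rewrite negb_and.
    by rewrite -leqNgt ltnW ?orbT.
  by rewrite count_pred0 expr0 scale1r.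
rewrite /= eq_sym (negbTE nix) /=; have ie' : i \in e by move: ie; rewrite (negbTE nix).
have xi : (x < i)%N by apply: (allP ax).
case Px: (P x) => /=; last by rewrite IH // add0n.
rewrite IH // wedgeZr -wedge_assoc wedge_form1C wedgeNl wedge_assoc.
by rewrite xi /= exprS mulN1r scaleNr scalerN.
Qed.

Lemma card_inversions1 (i : 'I_n) J :
  #|inversions [set i] J| = count (fun j => (j \in J) && (j < i)%N) (enum 'I_n).
Proof.
have -> : inversions [set i] J = [set (i, j) | j in [set j | (j \in J) && (j < i)%N]].
  apply/setP => -[x y]; rewrite !inE /=; apply/idP/imsetP.
    by case/and3P => /eqP-> yJ yi; exists y; rewrite // inE yJ.
  by case=> j; rewrite inE => /andP[jJ ji] [-> ->]; rewrite eqxx jJ ji.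
rewrite card_imset; last by move=> a b [].
by rewrite cardsE cardE -size_filter; congr size; rewrite {1}/enum_mem -enumT.
Qed.

Lemma actE_eps_wedge g (i : 'I_n) J :
  actE g (wedge (eps [set i]) (eps J)) = wedge (form1 (basis_image g i)) (actE g (eps J)).
Proof.
rewrite wedge_eps !actE_eps.
case: (boolP ([set i] :&: J == set0)) => d; last first.
  rewrite actE0 wedge_form1_span //; apply: mem_spanM; apply: map_f.
  by move: d; rewrite setI_eq0 disjoints1 negbK mem_enum.
have niJ : i \notin J by move: d; rewrite setI_eq0 disjoints1.
have enumU1 : enum (i |: J) = filter (fun x => (x == i) || (x \in J)) (enum 'I_n).
  by rewrite {1}/enum_mem -enumT; apply: eq_filter => x; rewrite !inE.
have enumJ : enum J = filter (fun x => x \in J) (enum 'I_n).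
  by rewrite {1}/enum_mem -enumT.
have sorted_ord : sorted (fun x y : 'I_n => (x < y)%N) (enum 'I_n).
  by have := iota_ltn_sorted 0 n; rewrite -val_enum_ord sorted_map.
rewrite actEZ actE_eps enumU1 (@wedgeL_insert _ (fun x => x \in J)) ?mem_enum //.
rewrite -enumJ scalerA wsignE card_inversions1 -exprD addnn -mul2n exprM sqrrN.
by rewrite !expr1n scale1r.
Qed.

Lemma actE_form1_wedge g (a : V) w :
  actE g (wedge (form1 a) w) = wedge (form1 (actD g a)) (actE g w).
Proof.
rewrite {1}(row_sum_delta a) {2}(row_sum_delta a) actD_sum !form1_sum.
rewrite wedge_suml actE_sum wedge_suml; apply: eq_bigr => i _.
rewrite /Defs.actD -scalemxAl !form1Z !wedgeZl actEZ; congr (_ *: _).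
rewrite (ext_expand w) wedge_sumr !actE_sum wedge_sumr; apply: eq_bigr => J _.
by rewrite wedgeZr !actEZ wedgeZr form1_delta actE_eps_wedge.
Qed.

Lemma actE_wedgeL g s : actE g (wedgeL s) = wedgeL (map (actD g) s).
Proof.
elim: s => [|a s IH] /=; last by rewrite actE_form1_wedge IH.
rewrite eunitE actE_eps (_ : enum set0 = [::]) //.
by apply: size0nil; rewrite -cardE cards0.
Qed.

End DiagonalAction.
Section FixedSpaces.
Variables (C : numClosedFieldType) (n : nat) (gT : finGroupType).
Variable rG : mx_representation C [set: gT]%G n.
Variable H : 'M[C]_n.
Hypothesis H_herm : forall i j, H j i = (H i j)^*.
Hypothesis H_posdef : forall v : 'rV[C]_n, v != 0 -> 0 < inner H v v.
Hypothesis H_inv : forall (g : gT) (u v : 'rV[C]_n),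
  inner H (actV rG g u) (actV rG g v) = inner H u v.
Local Notation V := 'rV[C]_n.
Local Notation actV := (actV rG).
Local Notation actD := (actD rG).
Local Notation inner := (inner H).
Local Notation fixV := (fixV rG).
Local Notation perp := (perp H).
Local Notation codim := (codim rG).
Local Notation pairing := (@pairing C n).
Local Notation spanM := (@spanM C n).
Local Notation D1 x := (dualSub H (fixV x)).
Local Notation D2 x := (dualSub H (perp (fixV x))).

Lemma rGM x y : rG (x * y)%g = rG x *m rG y.
Proof. by rewrite repr_mxM ?inE. Qed.

Lemma actVM x y v : actV (x * y)%g v = actV x (actV y v).
Proof. by rewrite /Defs.actV invMg rGM mulmxA. Qed.

Lemma actVK x v : actV x^-1 (actV x v) = v.
Proof. by rewrite -actVM mulVg /Defs.actV invg1 repr_mx1 mulmx1. Qed.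

Lemma actKV x v : actV x (actV x^-1 v) = v.
Proof. by rewrite -{1}(invgK x) actVK. Qed.

Lemma pairingE (phi v : V) : pairing phi v = (phi *m v^T) 0 0.
Proof. by rewrite /pairing mxE; apply: eq_bigr => i _; rewrite mxE. Qed.

Lemma pairingC (phi v : V) : pairing phi v = (v *m phi^T) 0 0.
Proof. by rewrite pairingE -[phi *m v^T]trmxK trmx_mul trmxK mxE. Qed.

Lemma pairing_actD g (phi v : V) : pairing (actD g phi) v = pairing phi (actV g^-1 v).
Proof. by rewrite !pairingE /Defs.actD /Defs.actV invgK trmx_mul -!mulmxA. Qed.

Lemma innerE (u v : V) : inner u v = (u *m (H *m (map_mx Num.conj v)^T)) 0 0.
Proof.
rewrite /Defs.inner mxE /=; apply: eq_bigr => i _.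
by rewrite !mxE mulr_sumr; apply: eq_bigr => j _; rewrite !mxE mulrA.
Qed.

Lemma innerBr (u v v' : V) : inner u (v - v') = inner u v - inner u v'.
Proof.
rewrite /Defs.inner -sumrB; apply: eq_bigr => i _; rewrite -sumrB; apply: eq_bigr => j _.
by rewrite !mxE rmorphB mulrBr.
Qed.

Lemma inner_herm (u v : V) : inner v u = (inner u v)^*.
Proof.
rewrite /Defs.inner rmorph_sum exchange_big; apply: eq_bigr => i _.
rewrite rmorph_sum; apply: eq_bigr => j _.
by rewrite !rmorphM /= conjCK H_herm [RHS]mulrC [(u 0 i)^* * _]mulrC mulrA.
Qed.

Lemma inner_eq0 (v : V) : inner v v = 0 -> v = 0.
Proof.
move=> h; apply/eqP; apply: contraT => nz.
by have := H_posdef nz; rewrite h ltxx.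
Qed.

Lemma mulmx_col0 m (A : 'M[C]_(m, n)) (c : 'cV[C]_n) :
  A *m c = 0 <-> (forall w : V, (w <= A)%MS -> (w *m c) 0 0 = 0).
Proof.
split=> [h w /submxP[x ->]|h]; first by rewrite -mulmxA h mulmx0 mxE.
apply/matrixP => i j; rewrite ord1.
by have := h (row i A) (row_sub i A); rewrite -row_mul mxE => ->; rewrite mxE.
Qed.

Lemma mx_eq0_sub m (M : 'M[C]_(m, n)) : (forall v : V, (v <= M)%MS -> v = 0) -> M = 0.
Proof.
move=> h; apply/eqP; apply: contraT => nz.
by have /eqP := h _ (nz_row_sub M); rewrite nz_row_eq0 (negbTE nz).
Qed.

Lemma sub_eq_rank m1 m2 (A : 'M[C]_(m1, n)) (B : 'M[C]_(m2, n)) :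
  (A <= B)%MS -> \rank A = \rank B -> (B <= A)%MS.
Proof.
move=> AB /eqP; case: (mxrank_leqif_eq AB) => _ ->.
by case/andP.
Qed.

Definition annM m (A : 'M[C]_(m, n)) : 'M[C]_n := kermx A^T.

Lemma annMP m (A : 'M[C]_(m, n)) (phi : V) :
  (phi <= annM A)%MS <-> (forall v, (v <= A)%MS -> pairing phi v = 0).
Proof.
rewrite /annM sub_kermx -trmx0 -(trmxK (phi *m A^T)) trmx_mul trmxK.
rewrite (inj_eq (@trmx_inj _ _ _)).
split=> [/eqP /mulmx_col0 h v vA|h]; first by rewrite pairingC; apply: h.
by apply/eqP/mulmx_col0 => w wA; rewrite -pairingC; apply: h.
Qed.

Lemma rank_annM m (A : 'M[C]_(m, n)) : \rank (annM A) = (n - \rank A)%N.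
Proof. by rewrite /annM mxrank_ker mxrank_tr. Qed.

Lemma annM_anti m1 m2 (A : 'M[C]_(m1, n)) (B : 'M[C]_(m2, n)) :
  (A <= B)%MS -> (annM B <= annM A)%MS.
Proof.
move=> AB; apply/row_subP => i; apply/annMP => v vA.
by apply/(annMP B (row i (annM B))).1; [exact: row_sub | exact: submx_trans AB].
Qed.

Definition perpM m (A : 'M[C]_(m, n)) : 'M[C]_n :=
  map_mx Num.conj (kermx (A *m H)^T).

Lemma perpMP m (A : 'M[C]_(m, n)) (v : V) :
  (v <= perpM A)%MS <-> (forall w, (w <= A)%MS -> inner w v = 0).
Proof.
have conjK : map_mx Num.conj (map_mx Num.conj v) = v.
  by apply/matrixP => i j; rewrite !mxE conjCK.
rewrite -{1}conjK /perpM map_submx sub_kermx -trmx0.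
rewrite -(trmxK (_ *m (A *m H)^T)) trmx_mul trmxK (inj_eq (@trmx_inj _ _ _)) -mulmxA.
split=> [/eqP /mulmx_col0 h w wA|h]; first by rewrite innerE; apply: h.
by apply/eqP/mulmx_col0 => w wA; rewrite -innerE; apply: h.
Qed.

Lemma rank_perpM m (A : 'M[C]_(m, n)) : \rank (perpM A) = (n - \rank A)%N.
Proof.
have H_free : row_free H.
  have : kermx H = 0.
    apply: mx_eq0_sub => v; rewrite sub_kermx => /eqP vH.
    by apply: inner_eq0; rewrite innerE mulmxA vH mul0mx mxE.
  move/eqP; rewrite -mxrank_eq0 mxrank_ker subn_eq0 => le.
  by rewrite /row_free eqn_leq rank_leq_row.
by rewrite /perpM mxrank_map mxrank_ker mxrank_tr mxrankMfree.
Qed.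

Lemma annM_perp_full m (A : 'M[C]_(m, n)) : row_full (annM A + annM (perpM A))%MS.
Proof.
have capAP : (A :&: perpM A)%MS = 0.
  apply: mx_eq0_sub => v; rewrite sub_capmx => /andP[vA /perpMP vP].
  by apply: inner_eq0; apply: vP.
have fullAP : \rank (A + perpM A)%MS = n.
  have := mxrank_sum_cap A (perpM A).
  by rewrite capAP mxrank0 addn0 rank_perpM subnKC ?rank_leq_col.
have capann : (annM A :&: annM (perpM A))%MS = 0.
  apply: mx_eq0_sub => chi; rewrite sub_capmx => /andP[/annMP h1 /annMP h2].
  have : (chi <= annM (A + perpM A)%MS)%MS.
    apply/annMP => v /sub_addsmxP[[u1 u2] /= ->].
    by rewrite pairingE linearD /= mulmxDr mxE -!pairingE h1 ?h2 ?addr0 ?submxMl.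
  have -> : annM (A + perpM A)%MS = 0.
    by apply/eqP; rewrite -mxrank_eq0 rank_annM fullAP subnn.
  by rewrite submx0 => /eqP.
have := mxrank_sum_cap (annM A) (annM (perpM A)).
rewrite capann mxrank0 addn0 !rank_annM rank_perpM subKn ?rank_leq_col //.
by rewrite subnK ?rank_leq_col // /row_full => ->.
Qed.

Definition fixmx (x : gT) : 'M[C]_n := kermx (rG x - 1%:M).

Lemma fixmxP x v : fixV x v <-> (v <= fixmx x)%MS.
Proof.
rewrite /fixmx sub_kermx mulmxBr mulmx1 subr_eq0 /Defs.fixV /Defs.actV.
split => [h|/eqP h]; apply/eqP.
  by rewrite -{1}h -mulmxA -rGM mulVg repr_mx1 mulmx1.
by rewrite -{1}h -mulmxA -rGM mulgV repr_mx1 mulmx1.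
Qed.

Lemma codimE x : codim x = \rank (rG x - 1%:M).
Proof. by rewrite /Defs.codim mxrank_ker subKn // rank_leq_row. Qed.

Lemma rank_fixmx x : \rank (fixmx x) = (n - codim x)%N.
Proof. by rewrite /fixmx mxrank_ker codimE. Qed.

Lemma codim_le x : (codim x <= n)%N.
Proof. by rewrite codimE rank_leq_row. Qed.

Lemma rank_ann_fixmx x : \rank (annM (fixmx x)) = codim x.
Proof. by rewrite rank_annM rank_fixmx subKn // codim_le. Qed.

Lemma codim_conj g h : codim (g * h * g^-1)%g = codim h.
Proof.
have le g' h' : (codim (g' * h' * g'^-1)%g <= codim h')%N.
  rewrite !codimE.
  have -> : rG (g' * h' * g'^-1)%g - 1%:M = rG g' *m (rG h' - 1%:M) *m rG g'^-1%g.
    by rewrite mulmxBr mulmx1 mulmxBl -!rGM mulgV repr_mx1.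
  by apply: leq_trans (mxrankM_maxl _ _) _; apply: mxrankM_maxr.
apply/eqP; rewrite eqn_leq le /=.
have := le g^-1%g (g * h * g^-1)%g.
by rewrite invgK !mulgA mulVg mul1g -mulgA mulVg mulg1.
Qed.

Lemma fix_conj g h v : fixV (g * h * g^-1)%g v -> fixV h (actV g^-1 v).
Proof.
move=> fv; rewrite /Defs.fixV -actVM.
have -> : (h * g^-1 = g^-1 * (g * h * g^-1))%g by rewrite !mulgA mulVg mul1g.
by rewrite actVM fv.
Qed.

Lemma perp_anti (W1 W2 : V -> Prop) :
  (forall v, W1 v -> W2 v) -> forall v, perp W2 v -> perp W1 v.
Proof. by move=> hW v p w /hW; apply: p. Qed.

Lemma perp_conj g h w : perp (fixV h) w -> perp (fixV (g * h * g^-1)%g) (actV g w).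
Proof. by move=> pw u fu; rewrite -(H_inv g^-1) actVK; apply: pw; exact: fix_conj. Qed.

Lemma D2_ann h phi : D2 h phi -> (phi <= annM (fixmx h))%MS.
Proof.
move=> D2phi; apply/annMP => v /fixmxP fv; apply: D2phi => w pw.
by rewrite inner_herm pw // rmorph0.
Qed.

Lemma actD_ann g h phi : D2 h phi -> (actD g phi <= annM (fixmx (g * h * g^-1)%g))%MS.
Proof.
move=> /D2_ann /annMP hp; apply/annMP => v /fixmxP fv.
by rewrite pairing_actD; apply: hp; apply/fixmxP; exact: fix_conj.
Qed.

Lemma ann_perp_D1 k chi : (chi <= annM (perpM (fixmx k)))%MS -> D1 k chi.
Proof.
move/annMP=> h v pv; apply: h; apply/perpMP => w /fixmxP fw; exact: pv.
Qed.

Section IndependentProduct.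
Variables (g h : gT) (s2 t2 : seq V).
Hypotheses (size_s2 : size s2 = codim g) (size_t2 : size t2 = codim h).
Hypothesis D2_s2 : forall a, a \in s2 -> D2 g a.
Hypothesis D2_t2 : forall a, a \in t2 -> D2 h a.
Let t2' := map (actD g) t2.
Let k := (g * h * g^-1)%g.
Hypothesis L_free : \rank (spanM (s2 ++ t2')) = size (s2 ++ t2').

Let ranks : [/\ \rank (spanM s2 :&: spanM t2') = 0, \rank (spanM s2) = size s2
              & \rank (spanM t2') = size t2']%N.
Proof.
have := mxrank_sum_cap (spanM s2) (spanM t2'); rewrite -spanM_cat L_free size_cat.
by have := rank_spanM s2; have := rank_spanM t2'; split; lia.
Qed.

Let cap0 : (spanM s2 :&: spanM t2')%MS = 0.
Proof. by case: ranks => r0 _ _; apply/eqP; rewrite -mxrank_eq0 r0. Qed.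

Let span_s2 : (annM (fixmx g) <= spanM s2)%MS.
Proof.
apply: sub_eq_rank; first by apply: spanM_sub => a /D2_s2; exact: D2_ann.
by case: ranks => _ -> _; rewrite rank_ann_fixmx.
Qed.

Let span_t2 : (annM (fixmx k) <= spanM t2')%MS.
Proof.
apply: sub_eq_rank; first by apply: spanM_sub => a /mapP[b /D2_t2 ? ->]; exact: actD_ann.
by case: ranks => _ _ ->; rewrite rank_ann_fixmx size_map size_t2 codim_conj.
Qed.

Lemma fix_product v : fixV (g * h)%g v -> fixV g v /\ fixV k v.
Proof.
move=> fv; have gh_eq : (g * h = k * g)%g by rewrite /k -!mulgA mulVg mulg1.
have e1 : actV g v = actV k^-1 v by rewrite -{2}fv gh_eq actVM actVK.
(* the covector dual to w = g.v - v vanishes on V^g and on V^k, hence lies in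
   span s2 n span g.t2 = 0 *)
set w := actV g v - v.
set psi : V := (H *m (map_mx Num.conj w)^T)^T.
have hp u : inner u w = pairing psi u by rewrite innerE pairingC trmxK.
have pg : (psi <= annM (fixmx g))%MS.
  by apply/annMP => u /fixmxP fu; rewrite -hp /w innerBr -{1}fu H_inv subrr.
have pk : (psi <= annM (fixmx k))%MS.
  apply/annMP => u /fixmxP fu; rewrite -hp /w innerBr e1.
  have fu' : actV k^-1 u = u by rewrite -{1}fu actVK.
  by rewrite -{1}fu' H_inv subrr.
have : (psi <= spanM s2 :&: spanM t2')%MS.
  by rewrite sub_capmx (submx_trans pg span_s2) (submx_trans pk span_t2).
rewrite cap0 submx0 => /eqP p0.
have fg : fixV g v.
  apply/eqP; rewrite -subr_eq0 -/w; apply/eqP/inner_eq0.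
  by rewrite hp p0 pairingE mul0mx mxE.
by split=> //; rewrite /Defs.fixV -{1}fg -actVM -gh_eq.
Qed.

Lemma span_product_ann : (spanM (s2 ++ t2') <= annM (fixmx (g * h)%g))%MS.
Proof.
have fixS (x : gT) : (forall v, fixV (g * h)%g v -> fixV x v) ->
    (annM (fixmx x) <= annM (fixmx (g * h)%g))%MS.
  move=> hx; apply: annM_anti; apply/row_subP => i; apply/fixmxP.
  by apply: hx; apply/fixmxP; exact: row_sub.
rewrite spanM_cat addsmx_sub; apply/andP; split; apply: spanM_sub.
  move=> a /D2_s2 /D2_ann sa; apply: submx_trans sa (fixS _ _) => v.
  by case/fix_product.
move=> _ /mapP[b /D2_t2 /(actD_ann g) sb ->]; apply: submx_trans sb (fixS _ _) => v.
by case/fix_product.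
Qed.

Lemma codim_product : codim (g * h)%g = (codim g + codim h)%N.
Proof.
apply/eqP; rewrite eqn_leq; apply/andP; split.
  rewrite !codimE (_ : rG (g * h)%g - 1%:M = rG k *m (rG g - 1%:M) + (rG k - 1%:M)).
    apply: leq_trans (mxrank_add _ _) _.
    by rewrite leq_add ?mxrankM_maxr // -!codimE /k codim_conj.
  by rewrite mulmxBr mulmx1 addrA subrK -rGM /k -!mulgA mulVg mulg1.
have := mxrankS span_product_ann.
by rewrite L_free size_cat size_map size_s2 size_t2 rank_ann_fixmx.
Qed.

Lemma D2_product a : a \in s2 ++ t2' -> D2 (g * h)%g a.
Proof.
rewrite mem_cat => /orP[/D2_s2 ha|/mapP[b bt ->]] v pv.
  by apply: ha; apply: perp_anti pv; apply: perp_anti => u /fix_product[].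
rewrite pairing_actD; apply: (D2_t2 bt) => w pw.
rewrite -(H_inv g) actKV; apply: pv => u fu.
by rewrite -(H_inv g^-1) actVK; apply: pw; apply: fix_conj; case: (fix_product fu).
Qed.

Lemma D1_product_adjust (phi : V) :
  exists2 b, (b - phi <= spanM (s2 ++ t2'))%MS & D1 (g * h)%g b.
Proof.
have span_ann : (annM (fixmx (g * h)%g) <= spanM (s2 ++ t2'))%MS.
  apply: sub_eq_rank span_product_ann _.
  by rewrite L_free rank_ann_fixmx size_cat size_map size_s2 size_t2 codim_product.
have /sub_addsmxP[[u1 u2] /= ephi] : (phi <= annM (fixmx (g * h)%g) +
    annM (perpM (fixmx (g * h)%g)))%MS by apply: submx_full; exact: annM_perp_full.
exists (u2 *m annM (perpM (fixmx (g * h)%g))); last by apply: ann_perp_D1; exact: submxMl.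
rewrite ephi opprD addrCA subrr addr0 -scaleN1r scalemx_sub //.
by apply: submx_trans span_ann; exact: submxMl.
Qed.

End IndependentProduct.

End FixedSpaces.
Section Components.
Variables (C : numClosedFieldType) (n : nat) (gT : finGroupType).
Variable rG : mx_representation C [set: gT]%G n.
Variable H : 'M[C]_n.
Hypothesis H_inv : forall (g : gT) (u v : 'rV[C]_n),
  inner H (actV rG g u) (actV rG g v) = inner H u v.
Local Notation V := 'rV[C]_n.
Local Notation ext := (ext C n).
Local Notation actV := (actV rG).
Local Notation actD := (actD rG).
Local Notation fixV := (fixV rG).
Local Notation perp := (perp H).
Local Notation codim := (codim rG).
Local Notation pairing := (@pairing C n).
Local Notation polyS := (@polyS C n).
Local Notation idealS := (@idealS C n).
Local Notation wedge := (@wedge C n).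
Local Notation wedgeL := (@wedgeL C n).
Local Notation D1 x := (dualSub H (fixV x)).
Local Notation D2 x := (dualSub H (perp (fixV x))).

Definition scale_closed (P : (V -> C) -> Prop) :=
  forall f c, P f -> P (fun phi => f phi * c).

Lemma polyS_scale : scale_closed polyS.
Proof. by move=> f c hf; apply: polyS_mul hf (polyS_const _ _). Qed.

Lemma polyS_comp g f : polyS f -> polyS (fun phi => f (actD g phi)).
Proof.
elim=> [c|v|f1 f2 _ IH1 _ IH2|f1 f2 _ IH1 _ IH2].
- exact: polyS_const.
- have -> : (fun phi => pairing (actD g phi) v) = (fun phi => pairing phi (actV g^-1 v)).
    by apply: functional_extensionality => phi; rewrite pairing_actD.
  exact: polyS_lin.
- exact: polyS_add.
- exact: polyS_mul.
Qed.

Lemma polyS_sum I (r : seq I) (F : I -> V -> C) :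
  (forall i, polyS (F i)) -> polyS (fun phi => \sum_(i <- r) F i phi).
Proof.
move=> hF; elim: r => [|a r IH].
  have -> : (fun phi : V => \sum_(i <- [::]) F i phi) = (fun _ => 0).
    by apply: functional_extensionality => phi; rewrite big_nil.
  exact: polyS_const.
have -> : (fun phi : V => \sum_(i <- a :: r) F i phi) =
          (fun phi => F a phi + \sum_(i <- r) F i phi).
  by apply: functional_extensionality => phi; rewrite big_cons.
exact: polyS_add.
Qed.

Lemma ideal_poly W f : idealS W f -> polyS f.
Proof.
case=> m [h [w [hh [hw ->]]]]; apply: polyS_sum => i.
by apply: polyS_mul => //; apply: polyS_lin.
Qed.

Lemma ideal_mono (W1 W2 : V -> Prop) f :
  (forall v, W1 v -> W2 v) -> idealS W1 f -> idealS W2 f.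
Proof.
move=> hW [m [h [w [hh [hw ->]]]]]; exists m, h, w; split=> //; split=> // i.
exact: hW.
Qed.

Lemma ideal_mull W f p : idealS W f -> polyS p -> idealS W (fun phi => p phi * f phi).
Proof.
move=> [m [h [w [hh [hw ->]]]]] hp.
exists m, (fun i phi => p phi * h i phi), w; split; first by move=> i; exact: polyS_mul.
split=> //; apply: functional_extensionality => phi; rewrite mulr_sumr.
by apply: eq_bigr => i _; rewrite mulrA.
Qed.

Lemma ideal_mulr W f p : idealS W f -> polyS p -> idealS W (fun phi => f phi * p phi).
Proof.
move=> hf hp; have := ideal_mull hf hp.
have -> // : (fun phi : V => p phi * f phi) = (fun phi => f phi * p phi).
by apply: functional_extensionality => phi; rewrite mulrC.
Qed.

Lemma ideal_scale W : scale_closed (idealS W).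
Proof. by move=> f c hf; apply: ideal_mulr hf (polyS_const _ c). Qed.

Lemma ideal_comp g h f : idealS (perp (fixV h)) f ->
  idealS (perp (fixV (g * h * g^-1)%g)) (fun phi => f (actD g^-1 phi)).
Proof.
move=> [m [hh [w [hph [hw ->]]]]].
exists m, (fun i phi => hh i (actD g^-1 phi)), (fun i => actV g (w i)).
split; first by move=> i; exact: polyS_comp.
split; first by move=> i; apply: perp_conj.
apply: functional_extensionality => phi; apply: eq_bigr => i _.
by rewrite pairing_actD invgK.
Qed.

Inductive lin_span (Q : ext -> Prop) : ext -> Prop :=
| lin_span0 : lin_span Q 0
| lin_spanD x y : lin_span Q x -> lin_span Q y -> lin_span Q (x + y)
| lin_spanZ c z : Q z -> lin_span Q (c *: z).

Lemma lin_span_gen (Q : ext -> Prop) z : Q z -> lin_span Q z.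
Proof. by move=> hz; rewrite -(scale1r z); apply: lin_spanZ. Qed.

Lemma lin_span_scale Q c x : lin_span Q x -> lin_span Q (c *: x).
Proof.
elim=> [|x1 y1 _ IH1 _ IH2|c' z hz].
- by rewrite scaler0; apply: lin_span0.
- by rewrite scalerDr; apply: lin_spanD.
- by rewrite scalerA; apply: lin_spanZ.
Qed.

Lemma lin_span_lift (Q1 Q2 : ext -> Prop) x :
  (forall z, Q1 z -> lin_span Q2 z) -> lin_span Q1 x -> lin_span Q2 x.
Proof.
move=> hQ; elim=> [|x1 y1 _ IH1 _ IH2|c z hz].
- exact: lin_span0.
- exact: lin_spanD.
- by apply: lin_span_scale; apply: hQ.
Qed.

Lemma lin_span_wedge (Q1 Q2 Q : ext -> Prop) a b :
  (forall z1 z2, Q1 z1 -> Q2 z2 -> lin_span Q (wedge z1 z2)) ->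
  lin_span Q1 a -> lin_span Q2 b -> lin_span Q (wedge a b).
Proof.
move=> hQ ha hb; elim: ha => [|x1 y1 _ IH1 _ IH2|c z1 hz1].
- by rewrite wedge0l; apply: lin_span0.
- by rewrite wedgeDl; apply: lin_spanD.
elim: hb => [|x1 y1 _ IH1 _ IH2|c' z2 hz2].
- by rewrite wedge0r; apply: lin_span0.
- by rewrite wedgeDr; apply: lin_spanD.
- by rewrite wedgeZr wedgeZl; do 2 apply: lin_span_scale; apply: hQ.
Qed.

Lemma ext_span_lin Q x : ext_span Q x -> lin_span Q x.
Proof.
case=> m [c [y [hy ->]]]; rewrite ffun_sumZ.
elim/big_ind: _ => [|x1 x2|i _]; [exact: lin_span0 | exact: lin_spanD |].
by apply: lin_span_scale; apply: lin_span_gen.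
Qed.

Lemma ext_span_gen (Q : ext -> Prop) z : Q z -> ext_span Q z.
Proof.
move=> hz; exists 1%N, (fun _ => 1), (fun _ => z); split=> //.
by rewrite ffun_sumZ big_ord1 scale1r.
Qed.

Definition generator (g : gT) (p : nat) (z : ext) : Prop :=
  exists s1 s2 : seq V, [/\ (codim g <= p)%N, size s1 = (p - codim g)%N,
    size s2 = codim g, (forall a, a \in s1 -> D1 g a) /\ (forall a, a \in s2 -> D2 g a)
    & z = wedgeL (s1 ++ s2)].

Lemma Xg_span g p x : Xg rG H g p x -> lin_span (generator g p) x.
Proof.
rewrite /Xg; case: ifP => hc; last by move->; apply: lin_span0.
move=> /ext_span_lin; apply: lin_span_lift => z [a [b [ha [hb ->]]]].
apply: (lin_span_wedge _ (ext_span_lin ha) (ext_span_lin hb)).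
move=> z1 z2 [s1 [sz1 [h1 ->]]] [s2 [sz2 [h2 ->]]].
by apply: lin_span_gen; exists s1, s2; split; rewrite ?wedgeL_cat.
Qed.

Lemma generator_Xg g p z : generator g p z -> Xg rG H g p z.
Proof.
move=> [s1 [s2 [hc sz1 sz2 [h1 h2] ->]]]; rewrite /Xg hc.
apply: ext_span_gen; exists (wedgeL s1), (wedgeL s2).
split; first by apply: ext_span_gen; exists s1.
split; first by apply: ext_span_gen; exists s2.
by rewrite wedgeL_cat.
Qed.

(* More than n independent factors cannot occur. *)
Lemma generator_big g p z : generator g p z -> (n < p)%N -> z = 0.
Proof.
move=> [s1 [s2 [hc sz1 sz2 _ ->]]] hp; apply: wedgeL_dep.
rewrite size_cat sz1 sz2 subnK //; apply: leq_ltn_trans hp; exact: rank_leq_col.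
Qed.

Inductive tspan (P : (V -> C) -> Prop) (G : ext -> Prop) : (V -> ext) -> Prop :=
| tspan0 : tspan P G (fun _ => 0)
| tspanD F1 F2 : tspan P G F1 -> tspan P G F2 -> tspan P G (fun phi => F1 phi + F2 phi)
| tspanZ f z : P f -> G z -> tspan P G (fun phi => f phi *: z).

Lemma tspan_sum P G I (r : seq I) (F : I -> V -> ext) :
  (forall i, tspan P G (F i)) -> tspan P G (fun phi => \sum_(i <- r) F i phi).
Proof.
move=> hF; elim: r => [|a r IH].
  have -> : (fun phi : V => \sum_(i <- [::]) F i phi) = (fun _ => 0).
    by apply: functional_extensionality => phi; rewrite big_nil.
  exact: tspan0.
have -> : (fun phi : V => \sum_(i <- a :: r) F i phi) =
          (fun phi => F a phi + \sum_(i <- r) F i phi).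
  by apply: functional_extensionality => phi; rewrite big_cons.
exact: tspanD.
Qed.

Lemma tspan_lin_span (P : (V -> C) -> Prop) G f w :
  scale_closed P -> P f -> lin_span G w -> tspan P G (fun phi => f phi *: w).
Proof.
move=> Ps hf; elim=> [|x y _ IH1 _ IH2|c z hz].
- have -> : (fun phi : V => f phi *: (0 : ext)) = (fun _ => 0).
    by apply: functional_extensionality => phi; rewrite scaler0.
  exact: tspan0.
- have -> : (fun phi : V => f phi *: (x + y)) = (fun phi => f phi *: x + f phi *: y).
    by apply: functional_extensionality => phi; rewrite scalerDr.
  exact: tspanD.
- have -> : (fun phi : V => f phi *: (c *: z)) = (fun phi => (f phi * c) *: z).
    by apply: functional_extensionality => phi; rewrite scalerA.
  by apply: tspanZ => //; apply: Ps.
Qed.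

Lemma tspan_zero P (G : ext -> Prop) F : (forall z, G z -> z = 0) -> tspan P G F ->
  F = (fun _ => 0).
Proof.
move=> hG; elim=> [//|F1 F2 _ -> _ ->|f z _ /hG ->].
  by apply: functional_extensionality => phi; rewrite addr0.
by apply: functional_extensionality => phi; rewrite scaler0.
Qed.

Lemma tensorS_tspan (P : (V -> C) -> Prop) g p F :
  scale_closed P -> tensorS P (Xg rG H g p) F -> tspan P (generator g p) F.
Proof.
move=> Ps [m [f [x [hf [hx ->]]]]].
have -> : (fun phi => [ffun K => \sum_(i < m) f i phi * x i K]) =
          (fun phi => \sum_(i < m) f i phi *: x i).
  by apply: functional_extensionality => phi; rewrite ffun_sumZ.
by apply: tspan_sum => i; apply: tspan_lin_span => //; exact: Xg_span.
Qed.

Lemma tensorS_add P (X : ext -> Prop) F1 F2 :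
  tensorS P X F1 -> tensorS P X F2 -> tensorS P X (fun phi => F1 phi + F2 phi).
Proof.
move=> [m1 [f1 [x1 [hf1 [hx1 ->]]]]] [m2 [f2 [x2 [hf2 [hx2 ->]]]]].
pose pick T (u : 'I_m1 -> T) (v : 'I_m2 -> T) i :=
  match split i with inl a => u a | inr b => v b end.
exists (m1 + m2)%N, (pick _ f1 f2), (pick _ x1 x2).
do 2 (split; first by move=> i; rewrite /pick; case: (split i)).
apply: functional_extensionality => phi; apply/ffunP => K.
rewrite ffunE !ffunE big_split_ord /=; congr (_ + _); apply: eq_bigr => i _.
  by rewrite /pick (unsplitK (inl i) : split (lshift m2 i) = inl i).
by rewrite /pick (unsplitK (inr i) : split (rshift m1 i) = inr i).
Qed.

Lemma tspan_tensorS (P : (V -> C) -> Prop) g p F :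
  tspan P (generator g p) F -> tensorS P (Xg rG H g p) F.
Proof.
elim=> [|F1 F2 _ IH1 _ IH2|f z hf hz].
- exists 0%N, (fun _ _ => 0), (fun _ => 0); do 2 (split; first by case).
  by apply: functional_extensionality => phi; apply/ffunP => K; rewrite !ffunE big_ord0.
- exact: tensorS_add.
- exists 1%N, (fun _ => f), (fun _ => z); split=> //; split=> [_|]; first exact: generator_Xg.
  by apply: functional_extensionality => phi; rewrite ffun_sumZ big_ord1.
Qed.

Lemma tensorS_mono (P1 P2 : (V -> C) -> Prop) X F :
  (forall f, P1 f -> P2 f) -> tensorS P1 X F -> tensorS P2 X F.
Proof.
by move=> hP [m [f [x [hf [hx ->]]]]]; exists m, f, x; split=> // i; apply: hP.
Qed.

End Components.
Section Products.
Variables (C : numClosedFieldType) (n : nat) (gT : finGroupType).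
Variable rG : mx_representation C [set: gT]%G n.
Variable H : 'M[C]_n.
Hypothesis H_herm : forall i j, H j i = (H i j)^*.
Hypothesis H_posdef : forall v : 'rV[C]_n, v != 0 -> 0 < inner H v v.
Hypothesis H_inv : forall (g : gT) (u v : 'rV[C]_n),
  inner H (actV rG g u) (actV rG g v) = inner H u v.
Local Notation V := 'rV[C]_n.
Local Notation ext := (ext C n).
Local Notation elt := (elt C n gT).
Local Notation actD := (actD rG).
Local Notation actE := (actE rG).
Local Notation fixV := (fixV rG).
Local Notation perp := (perp H).
Local Notation polyS := (@polyS C n).
Local Notation idealS := (@idealS C n).
Local Notation wedge := (@wedge C n).
Local Notation wedgeL := (@wedgeL C n).
Local Notation generator := (generator rG H).

(* The fixed-space condition under which products of generators survive. *)
Definition fix_split (g h : gT) :=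
  forall v, fixV (g * h)%g v -> fixV g v /\ fixV (g * h * g^-1)%g v.

(* If the codim g + codim h "normal" covectors are
   dependent the product vanishes; otherwise the key linear algebra applies and
   the remaining covectors are adjusted into (V^{gh})^*. *)
Lemma generator_product g h p q z1 z2 : generator g p z1 -> generator h q z2 ->
  wedge z1 (actE g z2) = 0 \/
  fix_split g h /\ lin_span (generator (g * h)%g (p + q)) (wedge z1 (actE g z2)).
Proof.
move=> [s1 [s2 [cg sz1 sz2 [h1 h2] ->]]] [t1 [t2 [ch tz1 tz2 [k1 k2] ->]]].
rewrite actE_wedgeL map_cat -wedgeL_cat wedgeL_blocks.
set U := s1 ++ map (actD g) t1; set L := s2 ++ map (actD g) t2.
have [L_free|L_dep] := eqVneq (\rank (spanM L)) (size L); last first.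
  have hr : (\rank (spanM L) < size L)%N by rewrite ltn_neqAle L_dep rank_spanM.
  by left; rewrite wedgeL_cat (wedgeL_dep hr) wedge0r scaler0.
right; split; first exact: (fix_product H_herm H_posdef H_inv sz2 tz2 h2 k2 L_free).
have cod := codim_product H_herm H_posdef H_inv sz2 tz2 h2 k2 L_free.
have [U' [szU D1U <-]] := @wedgeL_adjust _ _ _ U L
  (D1_product_adjust H_herm H_posdef H_inv sz2 tz2 h2 k2 L_free).
apply: lin_spanZ; exists U', L; split.
- by rewrite cod leq_add.
- by rewrite szU size_cat size_map sz1 tz1 cod; lia.
- by rewrite size_cat size_map sz2 tz2 cod.
- by split=> //; exact: (D2_product H_herm H_posdef H_inv sz2 tz2 h2 k2 L_free).
- by [].
Qed.

Definition twisted_wedge (g : gT) (F1 F2 : V -> ext) : V -> ext :=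
  fun phi => wedge (F1 phi) (actE g (F2 (actD g^-1 phi))).

Definition coef_product (PA PB PO : gT -> (V -> C) -> Prop) :=
  forall g h f1 f2, PA g f1 -> PB h f2 -> fix_split g h ->
    PO (g * h)%g (fun phi => f1 phi * f2 (actD g^-1 phi)).

Section TwistedProducts.
Variables PA PB PO : gT -> (V -> C) -> Prop.
Hypothesis PO_scale : forall g, scale_closed (PO g).
Hypothesis PABO : coef_product PA PB PO.

Lemma tspan_twisted_gen g h p q f1 z1 F2 : PA g f1 -> generator g p z1 ->
  tspan (PB h) (generator h q) F2 ->
  tspan (PO (g * h)%g) (generator (g * h)%g (p + q))
        (twisted_wedge g (fun phi => f1 phi *: z1) F2).
Proof.
move=> hf1 hz1; elim=> [|B1 B2 _ IH1 _ IH2|f2 z2 hf2 hz2].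
- have -> : twisted_wedge g (fun phi => f1 phi *: z1) (fun _ => 0) = (fun _ => 0).
    by apply: functional_extensionality => phi; rewrite /twisted_wedge actE0 wedge0r.
  exact: tspan0.
- have -> : twisted_wedge g (fun phi => f1 phi *: z1) (fun phi => B1 phi + B2 phi) =
    (fun phi => twisted_wedge g (fun phi => f1 phi *: z1) B1 phi +
                twisted_wedge g (fun phi => f1 phi *: z1) B2 phi).
    by apply: functional_extensionality => phi; rewrite /twisted_wedge actED wedgeDr.
  exact: tspanD.
have -> : twisted_wedge g (fun phi => f1 phi *: z1) (fun phi => f2 phi *: z2) =
  (fun phi => (f1 phi * f2 (actD g^-1 phi)) *: wedge z1 (actE g z2)).
  apply: functional_extensionality => phi.
  by rewrite /twisted_wedge actEZ wedgeZl wedgeZr scalerA.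
case: (generator_product hz1 hz2) => [->|[split_gh span_gh]].
  have -> : (fun phi => (f1 phi * f2 (actD g^-1 phi)) *: (0 : ext)) = (fun _ => 0).
    by apply: functional_extensionality => phi; rewrite scaler0.
  exact: tspan0.
by apply: tspan_lin_span => //; apply: PABO.
Qed.

Lemma tspan_twisted g h p q F1 F2 :
  tspan (PA g) (generator g p) F1 -> tspan (PB h) (generator h q) F2 ->
  tspan (PO (g * h)%g) (generator (g * h)%g (p + q)) (twisted_wedge g F1 F2).
Proof.
move=> t1 t2; elim: t1 => [|A1 A2 _ IH1 _ IH2|f1 z1 hf1 hz1].
- have -> : twisted_wedge g (fun _ => 0) F2 = (fun _ => 0).
    by apply: functional_extensionality => phi; rewrite /twisted_wedge wedge0l.
  exact: tspan0.
- have -> : twisted_wedge g (fun phi => A1 phi + A2 phi) F2 =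
    (fun phi => twisted_wedge g A1 F2 phi + twisted_wedge g A2 F2 phi).
    by apply: functional_extensionality => phi; rewrite /twisted_wedge wedgeDl.
  exact: tspanD.
- exact: tspan_twisted_gen.
Qed.

End TwistedProducts.

(* Elements of C^. assembled from graded pieces, and the subspaces of C^. whose
   g-components have coefficients in the class P g (polyS for Z, the ideal
   I((V^g)^perp) for B). *)
Definition graded (b : 'I_n.+1 -> elt) : elt :=
  fun g phi => [ffun K => \sum_(p < n.+1) b p g phi K].

Definition inX (P : gT -> (V -> C) -> Prop) (a : elt) :=
  exists b : 'I_n.+1 -> elt,
    (forall (p : 'I_n.+1) g, tensorS (P g) (Xg rG H g p) (b p g)) /\ a = graded b.

Lemma smashE (a b : elt) k phi :
  smash rG a b k phi = \sum_g twisted_wedge g (a g) (b (g^-1 * k)%g) phi.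
Proof. by apply/ffunP => K; rewrite ffunE sum_ffunE. Qed.

Lemma smash_graded ba bb k phi : smash rG (graded ba) (graded bb) k phi =
  \sum_(p < n.+1) \sum_(q < n.+1) smash rG (ba p) (bb q) k phi.
Proof.
rewrite smashE.
under eq_bigr => g _ do rewrite /twisted_wedge /graded -!sum_ffun actE_sum wedge_sum2.
rewrite exchange_big; apply: eq_bigr => p _; rewrite exchange_big; apply: eq_bigr => q _.
by rewrite smashE.
Qed.

Lemma sum_degree (m : nat) (Y : ext) : ((n < m)%N -> Y = 0) ->
  \sum_(r < n.+1) (if m == r then Y else 0) = Y.
Proof.
move=> hY; case: (ltnP n m) => hm.
  by rewrite hY //; apply: big1 => r _; case: (m == r).
rewrite (bigD1 (Ordinal (hm : m < n.+1)%N)) //= eqxx big1 ?addr0 // => r nr.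
by case: eqP => // e; move: nr; rewrite -(inj_eq val_inj) /= -e eqxx.
Qed.

Lemma smash_closed (PA PB PO : gT -> (V -> C) -> Prop) a b :
  (forall g, scale_closed (PA g)) -> (forall g, scale_closed (PB g)) ->
  (forall g, scale_closed (PO g)) -> coef_product PA PB PO ->
  inX PA a -> inX PB b -> inX PO (smash rG a b).
Proof.
move=> PAs PBs POs PABO [ba [hba ->]] [bb [hbb ->]].
have Tpq (p q : 'I_n.+1) k : tspan (PO k) (generator k (p + q)) (smash rG (ba p) (bb q) k).
  have -> : smash rG (ba p) (bb q) k =
      (fun phi => \sum_g twisted_wedge g (ba p g) (bb q (g^-1 * k)%g) phi).
    by apply: functional_extensionality => phi; rewrite smashE.
  apply: tspan_sum => g.
  have := tspan_twisted POs PABO (tensorS_tspan (PAs g) (hba p g))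
            (tensorS_tspan (PBs _) (hbb q (g^-1 * k)%g)).
  by rewrite mulKVg.
exists (fun (r : 'I_n.+1) k phi => \sum_(p < n.+1) \sum_(q < n.+1)
          (if (p + q == r)%N then smash rG (ba p) (bb q) k phi else 0)); split.
  move=> r k; apply: tspan_tensorS; apply: tspan_sum => p; apply: tspan_sum => q.
  by case: eqP => [<-|_]; [exact: Tpq | exact: tspan0].
apply: functional_extensionality => k; apply: functional_extensionality => phi.
rewrite smash_graded /graded -sum_ffun [RHS]exchange_big; apply: eq_bigr => p _.
rewrite [RHS]exchange_big; apply: eq_bigr => q _; rewrite sum_degree // => big.
by rewrite (tspan_zero (fun z hz => generator_big hz big) (Tpq p q k)).
Qed.

End Products.

(* The coefficient conditions: S(V) is a
   ring stable under G; I((V^h)^perp) is moved by g into I((V^{ghg^-1})^perp),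
   and both I((V^g)^perp) and I((V^{ghg^-1})^perp) lie in I((V^{gh})^perp)
   whenever the product is non-zero, since then V^{gh} = V^g n V^{ghg^-1}. *)
Theorem proposition6p1 (C : numClosedFieldType) (n : nat) (gT : finGroupType)
    (rG : mx_representation C [set: gT]%G n) (H : 'M[C]_n)
    (H_herm : forall i j, H j i = (H i j)^*)
    (H_posdef : forall v : 'rV[C]_n, v != 0 -> 0 < inner H v v)
    (H_inv : forall (g : gT) (u v : 'rV[C]_n),
        inner H (actV rG g u) (actV rG g v) = inner H u v) :
  (forall a b : elt C n gT, inZ rG H a -> inZ rG H b -> inZ rG H (smash rG a b)) /\
  (forall b : elt C n gT, inB rG H b -> inZ rG H b) /\
  (forall a b : elt C n gT, inZ rG H a -> inB rG H b ->
      inB rG H (smash rG a b) /\ inB rG H (smash rG b a)).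
Proof.
pose Zc (g : gT) := @polyS C n.
pose Bc (g : gT) := idealS (perp H (fixV rG g)).
have Zs g : scale_closed (Zc g) by exact: polyS_scale.
have Bs g : scale_closed (Bc g) by exact: ideal_scale.
have ZZ : coef_product rG Zc Zc Zc.
  by move=> g h f1 f2 h1 h2 _; exact: polyS_mul h1 (polyS_comp rG g^-1 h2).
have ZB : coef_product rG Zc Bc Bc.
  move=> g h f1 f2 h1 h2 split_gh; apply: ideal_mull h1.
  by apply: ideal_mono (ideal_comp H_inv g h2); apply: perp_anti => u /split_gh[].
have BZ : coef_product rG Bc Zc Bc.
  move=> g h f1 f2 h1 h2 split_gh; apply: ideal_mulr (polyS_comp rG g^-1 h2).
  by apply: ideal_mono h1; apply: perp_anti => u /split_gh[].
split; [|split].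
- by move=> a b; apply: (smash_closed H_herm H_posdef H_inv Zs Zs Zs ZZ).
- move=> b [bb [hb ->]]; exists bb; split=> // p g.
  exact: tensorS_mono (@ideal_poly C n _) (hb p g).
- move=> a b ha hb; split.
    exact: (smash_closed H_herm H_posdef H_inv Zs Bs Bs ZB).
  exact: (smash_closed H_herm H_posdef H_inv Bs Zs Bs BZ).
Qed.
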